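(* Let $f:[0,\infty)\to\mathbb{R}$ be convex with $f(1)=0$ and $G:[0,\mathsf{D_m}(f))\to[0,\infty)$ non-decreasing with $G(0)=0$, and suppose $(G,f)$ is divergence-subadditive. Let $p_X\ll q_X$ be distributions on a finite set $\mathcal{X}$. Consider testing $H_0: X^n\sim\prod_{i=1}^n p_X(x_i)$ against $H_1: X^n\sim\prod_{i=1}^n q_X(x_i)$ with a (possibly randomized) decision rule $U(X^n)\in\{0,1\}$, and let $\alpha=\Pr[U=1\mid H_0]$, $\beta=\Pr[U=1\mid H_1]$. Then $$G\big(D_f(\mathrm{Bern}(\alpha)\|\mathrm{Bern}(\beta))\big)\le n\,G\big(D_f(p_X\|q_X)\big).$$
   Context: For distributions $p\ll q$ on a finite set, $D_f(p\|q)=\sum_x q(x) f(p(x)/q(x))$ with $0f(0/0)=0$; $\mathsf{D_m}(f)=f(0)+\lim_{t\to\infty}f(t)/t$. $\mathrm{Bern}(a)$ is the distribution on $\{0,1\}$ assigning probability $a$ to $1$. $(G,f)$ is divergence-subadditive if for all finite sets $\mathcal{Y},\mathcal{Z}$ and distributions $q_Y\ll r_Y$, $q_Z\ll r_Z$: $G(D_f(q_Yq_Z\|r_Yr_Z))\le G(D_f(q_Y\|r_Y))+G(D_f(q_Z\|r_Z))$. *)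

From mathcomp Require Import all_boot all_order all_algebra.
From mathcomp Require Import all_classical all_reals all_analysis.
Set Implicit Arguments. Unset Strict Implicit. Unset Printing Implicit Defensive.
Import Order.TTheory GRing.Theory Num.Theory.
Local Open Scope ring_scope.

Section Defs.
Variable R : realType.

Definition convex_on_nonneg (f : R -> R) : Prop :=
  forall x y l : R, 0 <= x -> 0 <= y -> 0 <= l -> l <= 1 ->
    f (l * x + (1 - l) * y) <= l * f x + (1 - l) * f y.

Definition Dm (f : R -> R) : \bar R :=
  ((f 0)%:E + lim (((f t / t)%:E) @[t --> +oo%R])%classic)%E.

Definition is_dist (T : finType) (p : T -> R) : Prop :=
  (forall x, 0 <= p x) /\ \sum_(x : T) p x = 1.

Definition abs_cont (T : finType) (p q : T -> R) : Prop :=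
  forall x, q x = 0 -> p x = 0.

(* D_f(p||q) = sum_x q(x) f(p(x)/q(x)), with the convention 0 f(0/0) = 0 *)
Definition Df (f : R -> R) (T : finType) (p q : T -> R) : R :=
  \sum_(x : T) (if q x == 0 then 0 else q x * f (p x / q x)).

Definition prod_dist (Y Z : finType) (p : Y -> R) (q : Z -> R) : Y * Z -> R :=
  fun yz => p yz.1 * q yz.2.

Definition iid (T : finType) (n : nat) (p : T -> R) : {ffun 'I_n -> T} -> R :=
  fun xs => \prod_(i < n) p (xs i).

(* Bern(a) on {0,1} = bool, with probability a on 1 = true *)
Definition Bern (a : R) : bool -> R := fun b => if b then a else 1 - a.

Definition div_subadditive (G f : R -> R) : Prop :=
  forall (Y Z : finType) (qY rY : Y -> R) (qZ rZ : Z -> R),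
    is_dist qY -> is_dist rY -> is_dist qZ -> is_dist rZ ->
    abs_cont qY rY -> abs_cont qZ rZ ->
    G (Df f (prod_dist qY qZ) (prod_dist rY rZ))
      <= G (Df f qY rY) + G (Df f qZ rZ).
End Defs.

From mathcomp Require Import all_boot all_order all_algebra.
From mathcomp Require Import all_classical all_reals all_analysis.
From mathcomp Require Import ring lra.
Import Order.TTheory GRing.Theory Num.Theory.
Import numFieldNormedType.Exports.
Set Implicit Arguments. Unset Strict Implicit. Unset Printing Implicit Defensive.
Local Open Scope ring_scope.

(* D_f(p||q) is a sum of values of the perspective (a, b) |-> b f(a/b), which is
   subadditive because f is convex.  Subadditivity yields the data-processing
   inequality for the channel x^n |-> Bern(U(x^n)), so that
   D_f(Bern alpha||Bern beta) <= D_f(p^n||q^n), and divergence-subadditivity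
   applied to p^(n+1) = p x p^n gives G(D_f(p^n||q^n)) <= n G(D_f(p||q)).  The two are
   chained by the monotonicity of G, which needs D_f(p^n||q^n) in the domain
   [0, D_m(f)) of G: a divergence with p << q is either 0 or strictly below
   D_m(f).  Indeed, bounding f by its chords through (0, f 0), (1, 0) and
   (T, f T) gives D_f(p||q) <= TV(p,q) (f T/(T-1) + f 0), whereas
   D_m(f) >= f 0 + (f T - f 0)/T = (1 - 1/T) (f T/(T-1) + f 0), and
   TV(p,q) < 1 - 1/T once T is large, since p << q forces TV(p,q) < 1. *)

Lemma mulr_abs_cont (R : idomainType) (a b w : R) :
  (b = 0 -> a = 0) -> b * w = 0 -> a * w = 0.
Proof.
by move=> ab /eqP; rewrite mulf_eq0 => /orP[/eqP/ab -> | /eqP ->];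
  rewrite ?mul0r ?mulr0.
Qed.

Section Perspective.
Variables (R : realType) (f : R -> R).
Hypothesis f_convex : convex_on_nonneg f.

Definition persp (a b : R) : R := if b == 0 then 0 else b * f (a / b).

Lemma Df_persp (T : finType) (p q : T -> R) :
  Df f p q = \sum_x persp (p x) (q x).
Proof. by []. Qed.

Lemma persp_scale a b u : 0 <= u -> persp (a * u) (b * u) = u * persp a b.
Proof.
move=> u_ge0; rewrite /persp.
have [->|u_neq0] := eqVneq u 0; first by rewrite !mulr0 eqxx mul0r.
have [->|b_neq0] := eqVneq b 0; first by rewrite mul0r eqxx mulr0.
rewrite mulf_eq0 (negbTE u_neq0) (negbTE b_neq0) /=.
have -> : a * u / (b * u) = a / b by field; rewrite u_neq0 b_neq0.
by rewrite mulrAC mulrC.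
Qed.

Lemma persp_add_le a1 b1 a2 b2 : 0 <= a1 -> 0 <= b1 -> 0 <= a2 -> 0 <= b2 ->
  (b1 = 0 -> a1 = 0) -> (b2 = 0 -> a2 = 0) ->
  persp (a1 + a2) (b1 + b2) <= persp a1 b1 + persp a2 b2.
Proof.
move=> a1_ge0 b1_ge0 a2_ge0 b2_ge0 ab1 ab2; rewrite /persp.
have [b1_0|b1_neq0] := eqVneq b1 0; first by rewrite b1_0 ab1 // !add0r.
have [b2_0|b2_neq0] := eqVneq b2 0.
  by rewrite b2_0 ab2 // !addr0 (negbTE b1_neq0).
have b1_gt0 : 0 < b1 by rewrite lt_def b1_neq0.
have b2_gt0 : 0 < b2 by rewrite lt_def b2_neq0.
have b_gt0 : 0 < b1 + b2 by rewrite addr_gt0.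
rewrite gt_eqF //.
(* Jensen with the weights b1/(b1+b2) and b2/(b1+b2). *)
set l := b1 / (b1 + b2).
have l_ge0 : 0 <= l by rewrite divr_ge0 // ltW.
have l_le1 : l <= 1 by rewrite ler_pdivrMr // mul1r lerDl ltW.
have := f_convex (divr_ge0 a1_ge0 b1_ge0) (divr_ge0 a2_ge0 b2_ge0) l_ge0 l_le1.
have -> : l * (a1 / b1) + (1 - l) * (a2 / b2) = (a1 + a2) / (b1 + b2).
  by rewrite /l; field; rewrite ?gt_eqF.
move=> /(ler_wpM2l (ltW b_gt0)).
have -> // : (b1 + b2) * (l * f (a1 / b1) + (1 - l) * f (a2 / b2))
             = b1 * f (a1 / b1) + b2 * f (a2 / b2).
by rewrite /l; field; rewrite gt_eqF.
Qed.

Lemma persp_sum_le (I : finType) (a b : I -> R) :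
  (forall i, 0 <= a i) -> (forall i, 0 <= b i) -> (forall i, b i = 0 -> a i = 0) ->
  persp (\sum_i a i) (\sum_i b i) <= \sum_i persp (a i) (b i).
Proof.
move=> a_ge0 b_ge0 ab.
pose Inv A B C := [/\ 0 <= A, 0 <= B, B = 0 -> A = 0 & persp A B <= C].
suff [] : Inv (\sum_i a i) (\sum_i b i) (\sum_i persp (a i) (b i)) by [].
apply: (big_rec3 Inv); first by split => //; rewrite /persp eqxx.
move=> i A B C _ [A_ge0 B_ge0 AB le_ABC]; split.
- exact: addr_ge0.
- exact: addr_ge0.
- by move=> /eqP; rewrite paddr_eq0 // => /andP[/eqP/ab -> /eqP/AB ->]; rewrite addr0.
- apply: le_trans (persp_add_le (a_ge0 i) (b_ge0 i) A_ge0 B_ge0 (ab i) AB) _.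
  by rewrite lerD2l.
Qed.

Hypothesis f1 : f 1 = 0.

Lemma Df_ge0 (T : finType) (p q : T -> R) :
  is_dist p -> is_dist q -> abs_cont p q -> 0 <= Df f p q.
Proof.
move=> [p_ge0 p1] [q_ge0 q1] pq; rewrite Df_persp.
by have := persp_sum_le p_ge0 q_ge0 pq; rewrite p1 q1 /persp oner_eq0 divr1 mul1r f1.
Qed.

End Perspective.

Section Channel.
Variables (R : realType) (X Y : finType) (W : X -> Y -> R).
Hypotheses (W_ge0 : forall x y, 0 <= W x y) (W_sum1 : forall x, \sum_y W x y = 1).

Definition channel_out (p : X -> R) : Y -> R := fun y => \sum_x p x * W x y.

Lemma is_dist_channel_out p : is_dist p -> is_dist (channel_out p).
Proof.
move=> [p_ge0 p1]; split => [y|]; first by apply: sumr_ge0 => x _; rewrite mulr_ge0.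
rewrite exchange_big -[RHS]p1; apply: eq_bigr => x _.
by rewrite -mulr_sumr W_sum1 mulr1.
Qed.

Lemma abs_cont_channel_out p q : (forall x, 0 <= q x) -> abs_cont p q ->
  abs_cont (channel_out p) (channel_out q).
Proof.
move=> q_ge0 pq y /(psumr_eq0P (fun x _ => mulr_ge0 (q_ge0 x) (W_ge0 x y))) qW0.
by apply: big1 => x _; apply: mulr_abs_cont (pq x) (qW0 x isT).
Qed.

Lemma Df_channel_out_le (f : R -> R) p q : convex_on_nonneg f ->
  (forall x, 0 <= p x) -> (forall x, 0 <= q x) -> abs_cont p q ->
  Df f (channel_out p) (channel_out q) <= Df f p q.
Proof.
move=> f_convex p_ge0 q_ge0 pq; rewrite !Df_persp.
apply: (@le_trans _ _ (\sum_y \sum_x persp f (p x * W x y) (q x * W x y))).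
  apply: ler_sum => y _; apply: persp_sum_le => // x; rewrite ?mulr_ge0 //.
  exact: mulr_abs_cont (pq x).
rewrite exchange_big; apply: ler_sum => x _.
under eq_bigr do rewrite persp_scale //.
by rewrite -mulr_suml W_sum1 mul1r.
Qed.

End Channel.

Lemma is_dist_Bern (R : realType) (a : R) : 0 <= a <= 1 -> is_dist (Bern a).
Proof.
move=> /andP[a_ge0 a_le1]; split => [[]|]; rewrite /Bern ?subr_ge0 //.
by rewrite big_bool /= addrC subrK.
Qed.

Lemma Bern_channel_out (R : realType) (X : finType) (p U : X -> R) :
  \sum_x p x = 1 -> Bern (\sum_x p x * U x) = channel_out (fun x => Bern (U x)) p.
Proof.
move=> p1; apply: funext => -[] //=.
by rewrite /channel_out -{1}p1 -sumrB; apply: eq_bigr => x _ /=; ring.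
Qed.

Lemma Df_Bern_test_le (R : realType) (f : R -> R) (X : finType) (P Q U : X -> R) :
  convex_on_nonneg f -> f 1 = 0 -> is_dist P -> is_dist Q -> abs_cont P Q ->
  (forall x, 0 <= U x <= 1) ->
  0 <= Df f (Bern (\sum_x P x * U x)) (Bern (\sum_x Q x * U x)) <= Df f P Q.
Proof.
move=> f_convex f1 hP hQ PQ hU; have [P_ge0 P1] := hP; have [Q_ge0 Q1] := hQ.
have W_ge0 x b : 0 <= Bern (U x) b by case: (is_dist_Bern (hU x)).
have W_sum1 x : \sum_b Bern (U x) b = 1 by case: (is_dist_Bern (hU x)).
rewrite !Bern_channel_out //; apply/andP; split.
  apply: Df_ge0 => //; first exact: is_dist_channel_out hP.
    exact: is_dist_channel_out hQ.
  exact: abs_cont_channel_out.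
exact: Df_channel_out_le.
Qed.

Section Iid.
Variables (R : realType) (X : finType).

Definition fcons n (x : X) (ys : {ffun 'I_n -> X}) : {ffun 'I_n.+1 -> X} :=
  [ffun i => if unlift ord0 i is Some j then ys j else x].

Lemma iid_fcons (p : X -> R) n x (ys : {ffun 'I_n -> X}) :
  iid p (fcons x ys) = p x * iid p ys.
Proof.
rewrite /iid big_ord_recl ffunE unlift_none; congr (_ * _).
by apply: eq_bigr => i _; rewrite ffunE liftK.
Qed.

Lemma sum_fcons n (F : {ffun 'I_n.+1 -> X} -> R) :
  \sum_xs F xs = \sum_(z : X * {ffun 'I_n -> X}) F (fcons z.1 z.2).
Proof.
rewrite (reindex (fun z : X * {ffun 'I_n -> X} => fcons z.1 z.2)) //.
apply: onW_bij.
exists (fun xs : {ffun 'I_n.+1 -> X} => (xs ord0, [ffun j => xs (lift ord0 j)])).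
  move=> [x ys] /=; congr pair; first by rewrite ffunE unlift_none.
  by apply/ffunP => j; rewrite !ffunE liftK.
move=> xs; apply/ffunP => i; rewrite ffunE.
by case: unliftP => [j ->|->] //=; rewrite ffunE.
Qed.

Lemma is_dist_iid {n} (p : X -> R) : is_dist p -> is_dist (iid (n := n) p).
Proof.
move=> [p_ge0 p1]; split => [xs|]; first by apply: prodr_ge0.
rewrite /iid -(bigA_distr_bigA (fun (i : 'I_n) (x : X) => p x)) /=.
by rewrite big1.
Qed.

Lemma abs_cont_iid {n} (p q : X -> R) :
  abs_cont p q -> abs_cont (iid (n := n) p) (iid (n := n) q).
Proof.
move=> pq xs /eqP; rewrite /iid prodf_seq_eq0 => /hasP[i _ /andP[_ /eqP qi0]].
by rewrite (bigD1 i) //= pq // mul0r.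
Qed.

Lemma Df_iidS (f : R -> R) n (p q : X -> R) :
  Df f (iid (n := n.+1) p) (iid (n := n.+1) q)
  = Df f (prod_dist p (iid (n := n) p)) (prod_dist q (iid (n := n) q)).
Proof.
by rewrite /Df sum_fcons; apply: eq_bigr => -[x ys] _; rewrite /prod_dist !iid_fcons.
Qed.

Lemma G_Df_iid_le (f G : R -> R) (p q : X -> R) n :
  f 1 = 0 -> G 0 = 0 -> div_subadditive G f ->
  is_dist p -> is_dist q -> abs_cont p q ->
  G (Df f (iid (n := n) p) (iid (n := n) q)) <= n%:R * G (Df f p q).
Proof.
move=> f1 G0 G_subadd hp hq pq; elim: n => [|n IHn].
  rewrite /Df big1 ?G0 ?mul0r // => xs _.
  by rewrite /iid !big_ord0 oner_eq0 divr1 f1 mulr0.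
rewrite Df_iidS; apply: le_trans (G_subadd _ _ _ _ _ _ hp hq
  (is_dist_iid hp) (is_dist_iid hq) pq (abs_cont_iid pq)) _.
by rewrite -addn1 natrD mulrDl mul1r addrC lerD2r.
Qed.

End Iid.

Section DivergenceRange.
Variables (R : realType) (f : R -> R).
Hypothesis f_convex : convex_on_nonneg f.

Lemma chord_slope0_le a b : 0 < a -> a <= b -> (f a - f 0) / a <= (f b - f 0) / b.
Proof.
move=> a_gt0 ab; have b_gt0 : 0 < b := lt_le_trans a_gt0 ab.
have l_ge0 : 0 <= a / b by rewrite divr_ge0 // ltW.
have l_le1 : a / b <= 1 by rewrite ler_pdivrMr // mul1r.
have := f_convex (ltW b_gt0) (lexx (0 : R)) l_ge0 l_le1.
rewrite mulr0 addr0 divfK ?gt_eqF // => /(ler_wpM2r (ltW b_gt0)).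
have -> : (a / b * f b + (1 - a / b) * f 0) * b = a * f b + (b - a) * f 0.
  by field; rewrite gt_eqF.
rewrite ler_pdivrMr // mulrAC ler_pdivlMr // !mulrBl; lra.
Qed.

Lemma chord0_le_Dm T : 0 < T -> ((f 0 + (f T - f 0) / T)%:E <= Dm f)%E.
Proof.
move=> T_gt0.
pose k t : \bar R := ((f (Num.max t 1) - f 0) / Num.max t 1)%:E.
have k_nondecr : nondecreasing_fun k.
  move=> s t st; rewrite /k lee_fin; apply: chord_slope0_le.
    by rewrite lt_max ltr01 orbT.
  by rewrite ge_max !le_max st lexx orbT.
have k_cvg := nondecreasing_cvge k_nondecr.
set S := ereal_sup (range k) in k_cvg.
have f0t_cvg : ((f 0 / t)%:E @[t --> +oo] --> 0%:E)%classic.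
  apply: cvg_EFin; first by near=> t.
  have inv_cvg : ((fun t : R => t^-1) @ +oo%R --> (0 : R))%classic.
    apply/gtr0_cvgV0; last exact: cvg_id.
    by near=> t; near: t; apply: nbhs_pinfty_gt; rewrite num_real.
  by have := cvgMl_tmp (a := f 0) inv_cvg; rewrite mulr0; apply.
have slope_cvg : ((f t / t)%:E @[t --> +oo] --> S)%classic.
  rewrite -[S]adde0; apply: cvg_trans (cvgeD _ k_cvg f0t_cvg); last first.
    by rewrite adde_defC fin_num_adde_defr.
  apply: near_eq_cvg; near=> t => /=.
  have t_ge1 : 1 <= t by near: t; apply: nbhs_pinfty_ge; rewrite num_real.
  by rewrite /k max_l // -EFinD -mulrDl subrK.
rewrite /Dm (cvg_lim _ slope_cvg) // EFinD leeD2l //.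
apply: le_trans (ereal_sup_ubound (ex_intro2 _ _ T I erefl)).
rewrite /k lee_fin chord_slope0_le // le_max lexx.
Unshelve. all: by end_near. Qed.

Hypothesis f1 : f 1 = 0.

Lemma le_chords r T : 0 <= r <= T -> 1 < T ->
  f r <= Num.max (r - 1) 0 * (f T / (T - 1)) + Num.max (1 - r) 0 * f 0.
Proof.
move=> /andP[r_ge0 r_leT] T_gt1.
have [r_le1|r_gt1] := leP r 1.
  rewrite max_r ?subr_le0 // max_l ?subr_ge0 // mul0r add0r.
  have := f_convex ler01 (lexx (0 : R)) r_ge0 r_le1.
  by rewrite mulr1 mulr0 addr0 f1 mulr0 add0r.
rewrite max_l ?subr_ge0 ?(ltW r_gt1) // max_r ?subr_le0 ?(ltW r_gt1) // mul0r addr0.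
have T1_gt0 : 0 < T - 1 by rewrite subr_gt0.
set l := (T - r) / (T - 1).
have l_ge0 : 0 <= l by rewrite divr_ge0 ?subr_ge0 // ltW.
have l_le1 : l <= 1 by rewrite ler_pdivrMr // mul1r lerD2l lerN2 ltW.
have := f_convex ler01 (le_trans ler01 (ltW T_gt1)) l_ge0 l_le1.
have -> : l * 1 + (1 - l) * T = r by rewrite /l; field; rewrite gt_eqF.
have -> : 1 - l = (r - 1) / (T - 1) by rewrite /l; field; rewrite gt_eqF.
by rewrite f1 mulr0 add0r mulrAC -mulrA.
Qed.

Lemma persp_le_chords a b T : 0 <= a -> 0 <= b -> a <= T * b -> 1 < T ->
  persp f a b <= Num.max (a - b) 0 * (f T / (T - 1)) + Num.max (b - a) 0 * f 0.
Proof.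
move=> a_ge0 b_ge0 aTb T_gt1; rewrite /persp.
have [b0|b_neq0] := eqVneq b 0.
  have a0 : a = 0 by apply/le_anti; rewrite a_ge0 -[0](mulr0 T) -b0 aTb.
  by rewrite a0 b0 subrr maxxx !mul0r addr0.
have b_gt0 : 0 < b by rewrite lt_def b_neq0.
have max_bM c : Num.max (b * c) 0 = b * Num.max c 0.
  by rewrite maxr_pMr ?mulr0 // ltW.
have -> : a - b = b * (a / b - 1) by rewrite mulrBr mulrCA divff // !mulr1.
have -> : b - a = b * (1 - a / b) by rewrite mulrBr mulrCA divff // !mulr1.
rewrite !max_bM -!mulrA -mulrDr ler_wpM2l // le_chords //.
by rewrite divr_ge0 //= ler_pdivrMr.
Qed.

Definition tvd (X : finType) (p q : X -> R) : R := \sum_x Num.max (p x - q x) 0.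

Lemma tvdC (X : finType) (p q : X -> R) : is_dist p -> is_dist q -> tvd q p = tvd p q.
Proof.
move=> [_ p1] [_ q1]; apply/eqP; rewrite eq_sym -subr_eq0 /tvd -sumrB.
have max0B (c : R) : Num.max c 0 - Num.max (- c) 0 = c.
  have [c_le0|c_gt0] := leP c 0.
    by rewrite max_l ?oppr_ge0 // sub0r opprK.
  by rewrite max_r ?oppr_le0 ?(ltW c_gt0) // subr0.
have -> : \sum_x (Num.max (p x - q x) 0 - Num.max (q x - p x) 0) = \sum_x (p x - q x).
  by apply: eq_bigr => x _; rewrite -[q x - p x]opprB; apply: max0B.
by rewrite sumrB p1 q1 subrr.
Qed.

Lemma tvd_lt1 (X : finType) (p q : X -> R) :
  is_dist p -> is_dist q -> abs_cont p q -> tvd p q < 1.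
Proof.
move=> [p_ge0 p1] [q_ge0 _] pq.
have [x0 /andP[_ px0_gt0]] : exists x, true && (0 < p x).
  by apply: psumr_neq0P => // ; rewrite p1; apply/eqP; rewrite oner_eq0.
have qx0_gt0 : 0 < q x0.
  by rewrite lt_def q_ge0 andbT; apply: contraTneq px0_gt0 => /pq ->; rewrite ltxx.
rewrite -p1 /tvd (bigD1 x0) //= [X in _ < X](bigD1 x0) //=.
apply: ltr_leD.
  by rewrite gt_max px0_gt0 ltrBlDr ltrDl qx0_gt0.
by apply: ler_sum => x _; rewrite ge_max p_ge0 gerBl q_ge0.
Qed.

Lemma abs_cont_ratio_bound (X : finType) (p q : X -> R) :
  (forall x, 0 <= p x) -> (forall x, 0 <= q x) -> abs_cont p q ->
  exists2 M, 0 <= M & forall x, p x <= M * q x.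
Proof.
move=> p_ge0 q_ge0 pq; pose ratio x := if q x == 0 then 0 else p x / q x.
have ratio_ge0 x : 0 <= ratio x by rewrite /ratio; case: ifP => // _; rewrite divr_ge0.
exists (\sum_x ratio x); first exact: sumr_ge0.
move=> x; have [qx0|qx_neq0] := eqVneq (q x) 0; first by rewrite qx0 pq // mulr0.
rewrite -ler_pdivrMr ?lt_def ?qx_neq0 ?q_ge0 //.
have -> : p x / q x = ratio x by rewrite /ratio (negbTE qx_neq0).
by rewrite (bigD1 x) //= lerDl sumr_ge0.
Qed.

Lemma Df_le_tvd (X : finType) (p q : X -> R) T :
  is_dist p -> is_dist q -> 1 < T -> (forall x, p x <= T * q x) ->
  Df f p q <= tvd p q * (f T / (T - 1) + f 0).
Proof.
move=> hp hq T_gt1 pTq; have [p_ge0 _] := hp; have [q_ge0 _] := hq.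
rewrite Df_persp mulrDr -{2}(tvdC hp hq) !mulr_suml -big_split /=.
by apply: ler_sum => x _; apply: persp_le_chords.
Qed.

Lemma Df_eq0_or_lt_Dm (X : finType) (p q : X -> R) :
  is_dist p -> is_dist q -> abs_cont p q -> Df f p q = 0 \/ ((Df f p q)%:E < Dm f)%E.
Proof.
move=> hp hq pq; have [p_ge0 _] := hp; have [q_ge0 _] := hq.
have [M M_ge0 pMq] := abs_cont_ratio_bound p_ge0 q_ge0 pq.
set v := tvd p q.
have v_ge0 : 0 <= v by apply: sumr_ge0 => x _; rewrite le_max lexx orbT.
have v_lt1 : 0 < 1 - v by rewrite subr_gt0 tvd_lt1.
set T := M + 1 + (1 - v)^-1.
have inv_gt0 : 0 < (1 - v)^-1 by rewrite invr_gt0.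
have T_gt1 : 1 < T by rewrite /T; lra.
have T_gt0 : 0 < T := lt_trans ltr01 T_gt1.
have pTq x : p x <= T * q x.
  by apply: le_trans (pMq x) _; rewrite ler_wpM2r // /T; lra.
have vT_lt : v * T < T - 1.
  have -> : T - 1 = v * T + (M + 1) * (1 - v) by rewrite /T; field; rewrite gt_eqF.
  by rewrite ltrDl mulr_gt0 // ltr_wpDl.
set K := f T / (T - 1) + f 0.
have Df_le := Df_le_tvd hp hq T_gt1 pTq; rewrite -/v -/K in Df_le.
have [K_le0|K_gt0] := leP K 0.
  left; apply/le_anti; rewrite Df_ge0 // andbT.
  by apply: le_trans Df_le _; rewrite mulr_ge0_le0.
right; apply: lt_le_trans (chord0_le_Dm T_gt0); rewrite lte_fin.
have -> : f 0 + (f T - f 0) / T = K * ((T - 1) / T).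
  by rewrite /K; field; rewrite ?gt_eqF // subr_gt0.
apply: le_lt_trans Df_le _; rewrite [v * K]mulrC ltr_pM2l // ltr_pdivlMr //.
Qed.

End DivergenceRange.

Theorem theorem6 (R : realType) (f G : R -> R)
  (hfconv : convex_on_nonneg f) (hf1 : f 1 = 0)
  (hG0 : G 0 = 0)
  (hGnn : forall x : R, 0 <= x -> (x%:E < Dm f)%E -> 0 <= G x)
  (hGmono : forall x y : R, 0 <= x -> x <= y -> (y%:E < Dm f)%E -> G x <= G y)
  (hsub : div_subadditive G f)
  (X : finType) (pX qX : X -> R)
  (hp : is_dist pX) (hq : is_dist qX) (hpq : abs_cont pX qX)
  (n : nat) (U : {ffun 'I_n -> X} -> R)
  (hU : forall xs, 0 <= U xs <= 1) :
  let alpha := \sum_(xs : {ffun 'I_n -> X}) iid pX xs * U xs in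
  let beta := \sum_(xs : {ffun 'I_n -> X}) iid qX xs * U xs in
  G (Df f (Bern alpha) (Bern beta)) <= n%:R * G (Df f pX qX).
Proof.
cbv zeta.
have hpn := is_dist_iid (n := n) hp; have hqn := is_dist_iid (n := n) hq.
have pqn := abs_cont_iid (n := n) hpq.
have /andP[D_ge0 D_le] := Df_Bern_test_le hfconv hf1 hpn hqn pqn hU.
apply: le_trans (G_Df_iid_le n hf1 hG0 hsub hp hq hpq).
(* Monotonicity of G suffices. *)
have [Dn0|Dn_lt] := Df_eq0_or_lt_Dm hfconv hf1 hpn hqn pqn; last first.
  exact: hGmono D_ge0 D_le Dn_lt.
rewrite Dn0 in D_le *.
by rewrite (le_anti (andb_true_intro (conj D_le D_ge0))).
Qed.
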